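(* Let $n\ge1$, $X=\{0,1,\dots,n-1\}$, $f:X\to X$ any function, and $s\in X$. Let $(x_0,x_1,\dots)$ be the state sequence of the counter-assisted generator: $x_0=s$ and $x_i=f(x_{i-1})+i \pmod n$ for $i\ge1$. Then for all indices $i,j\ge0$ with $i\not\equiv j\pmod n$: if $x_i=x_j$ then $x_{i+1}\neq x_{j+1}$, and, if moreover $i,j\ge1$, also $x_{i-1}\neq x_{j-1}$.
   Context: Addition in $X$ is carried out modulo $n$. *)

From mathcomp Require Import all_boot.
Set Implicit Arguments. Unset Strict Implicit. Unset Printing Implicit Defensive.

Fixpoint cag_state (n : nat) (Hn : 0 < n) (f : 'I_n -> 'I_n) (s : 'I_n) (i : nat)
  : 'I_n :=
  match i with
  | 0 => s
  | i'.+1 => Ordinal (ltn_pmod (nat_of_ord (f (cag_state Hn f s i')) + i'.+1) Hn)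
  end.

(* Two equal consecutive pairs of states, x_k = x_l and x_(k+1) = x_(l+1),
   force f(x_k) + k + 1 = f(x_l) + l + 1 (mod n), hence k = l (mod n): the
   counter term cannot cancel.  Both claims are this fact, applied to the
   pairs at (i, i+1) and at (i-1, i). *)
From mathcomp Require Import all_boot.

Set Implicit Arguments.
Unset Strict Implicit.
Unset Printing Implicit Defensive.

Section CounterAssistedGenerator.

Variables (n : nat) (Hn : 0 < n) (f : 'I_n -> 'I_n) (s : 'I_n).

Local Notation x := (cag_state Hn f s).

Lemma cag_stateS k : nat_of_ord (x k.+1) = (f (x k) + k.+1) %% n.
Proof. by []. Qed.

Lemma cag_state_pair_eq_mod k l :
  x k = x l -> x k.+1 = x l.+1 -> k = l %[mod n].
Proof.
move=> eq_kl /(congr1 (@nat_of_ord n)).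
rewrite !cag_stateS eq_kl => /eqP; rewrite eqn_modDl -addn1 -[l.+1]addn1.
by rewrite eqn_modDr => /eqP.
Qed.

End CounterAssistedGenerator.

Theorem mainTheorem2 (n : nat) (Hn : 0 < n) (f : 'I_n -> 'I_n) (s : 'I_n)
  (i j : nat) :
  i != j %[mod n] ->
  cag_state Hn f s i = cag_state Hn f s j ->
  cag_state Hn f s i.+1 <> cag_state Hn f s j.+1 /\
  (0 < i -> 0 < j -> cag_state Hn f s i.-1 <> cag_state Hn f s j.-1).
Proof.
move=> neq_ij eq_ij; split=> [eq_ij1 | ].
  by move/eqP: neq_ij; apply; apply: cag_state_pair_eq_mod eq_ij1.
case: i j neq_ij eq_ij => [|i] [|j] // neq_ij eq_ij _ _ eq_ij1.
move/eqP: neq_ij; apply.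
by rewrite -addn1 -[j.+1]addn1 -modnDm (cag_state_pair_eq_mod eq_ij1 eq_ij) modnDm.
Qed.
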